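(* Let $A$ be a Hopf algebra with bijective antipode $S$, and let $\triangleright_1$ and $\triangleright_2$ be two actions of $A$ on an algebra $R$, each making $R$ a left $A$-module algebra. Suppose they are cocycle equivalent: there is a linear map $\gamma:A\to M(R)$ with $\gamma(1)=1$ such that for all $a,a'\in A$ and $x\in R$, (i) $\gamma(aa')=\sum\gamma(a_{(1)})\big(a_{(2)}\triangleright_1\gamma(a')\big)$, and (ii) $\sum(a_{(1)}\triangleright_2 x)\gamma(a_{(2)})=\sum\gamma(a_{(1)})(a_{(2)}\triangleright_1 x)$. Then the smash products $R\#_1 A$ and $R\#_2 A$ (built from $\triangleright_1$ and $\triangleright_2$ respectively) are isomorphic algebras.
   Context: $R$ is an algebra over $\mathbb C$, possibly without identity, with non-degenerate product; $M(R)$ its multiplier algebra. A left $A$-module algebra structure $\triangleright$ on $R$ means $R$ is a left $A$-module with $1\triangleright x=x$ and $a\triangleright(xx')=\sum(a_{(1)}\triangleright x)(a_{(2)}\triangleright x')$. The action $\triangleright_1$ is extended to $M(R)$ by letting $a\triangleright_1 m\in M(R)$ be the multiplier with $(a\triangleright_1 m)x=\sum a_{(1)}\triangleright_1(m(S(a_{(2)})\triangleright_1 x))$ and $x(a\triangleright_1 m)=\sum a_{(2)}\triangleright_1((S^{-1}(a_{(1)})\triangleright_1 x)m)$. The smash product $R\#_i A$ is $R\otimes A$ with product $(x\#_i a)(x'\#_i a')=\sum x(a_{(1)}\triangleright_i x')\#_i a_{(2)}a'$. *)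

From mathcomp Require Import all_boot all_order all_algebra.
From mathcomp Require Import complex Rstruct.
From Stdlib Require Rdefinitions.
Set Implicit Arguments. Unset Strict Implicit. Unset Printing Implicit Defensive.
Import GRing.Theory.
Local Open Scope ring_scope.

Notation CC := (complex Rdefinitions.R).

Definition lin {U W : lmodType CC} (f : U -> W) : Prop :=
  forall (c : CC) (u u' : U), f (c *: u + u') = c *: f u + f u'.

Definition bilin {U V W : lmodType CC} (f : U -> V -> W) : Prop :=
  (forall v, lin (fun u => f u v)) /\ (forall u, lin (f u)).

Definition trilin {U V X W : lmodType CC} (f : U -> V -> X -> W) : Prop :=
  (forall v x, lin (fun u => f u v x)) /\ (forall u x, lin (fun v => f u v x))
  /\ (forall u v, lin (f u v)).

(* The coproduct Delta(a) in A (x) A is represented by a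
   finite list of pairs (a_(1), a_(2)) whose sum of elementary tensors is
   Delta(a); every axiom below only uses Sweedler sums of multilinear
   expressions, so only the tensor Delta(a) matters. *)
Definition sw {A : Type} {V : nmodType} (cop : A -> seq (A * A)) (a : A)
  (f : A -> A -> V) : V := \sum_(p <- cop a) f p.1 p.2.

Definition is_hopf (A : algType CC) (cop : A -> seq (A * A)) (eps : A -> CC)
  (S : A -> A) : Prop :=
  [/\ (* Delta is linear *)
      forall (V : lmodType CC) (f : A -> A -> V), bilin f ->
        lin (fun a => sw cop a f),
      forall (V : lmodType CC) (f : A -> A -> A -> V), trilin f -> forall a,
        sw cop a (fun x y => sw cop x (fun u v => f u v y)) =
        sw cop a (fun x y => sw cop y (fun u v => f x u v)),
      (forall (V : lmodType CC) (f : A -> A -> V), bilin f -> forall a b,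
        sw cop (a * b) f = sw cop a (fun x y => sw cop b (fun u v => f (x * u) (y * v))))
      /\ (forall (V : lmodType CC) (f : A -> A -> V), bilin f -> sw cop 1 f = f 1 1),
      [/\ lin eps, forall a b, eps (a * b) = eps a * eps b, eps 1 = 1,
          forall a, sw cop a (fun x y => eps x *: y) = a &
          forall a, sw cop a (fun x y => eps y *: x) = a] &
      [/\ lin S,
          forall a, sw cop a (fun x y => S x * y) = eps a *: 1 &
          forall a, sw cop a (fun x y => x * S y) = eps a *: 1]].

Definition is_nd_algebra (R : lmodType CC) (mul : R -> R -> R) : Prop :=
  [/\ bilin mul,
      forall x y z, mul x (mul y z) = mul (mul x y) z,
      forall x, (forall y, mul x y = 0) -> x = 0 &
      forall x, (forall y, mul y x = 0) -> x = 0].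

(* Multipliers: m = (m_l, m_r) with m_l x = "m x" and m_r x = "x m". *)
Definition mult (R : lmodType CC) := ((R -> R) * (R -> R))%type.

Definition is_mult (R : lmodType CC) (mul : R -> R -> R) (m : mult R) : Prop :=
  [/\ lin m.1, lin m.2,
      forall x y, m.1 (mul x y) = mul (m.1 x) y,
      forall x y, m.2 (mul x y) = mul x (m.2 y) &
      forall x y, mul (m.2 x) y = mul x (m.1 y)].

Definition mone (R : lmodType CC) : mult R := (@id R, @id R).

Definition mmul (R : lmodType CC) (m n : mult R) : mult R :=
  (fun x => m.1 (n.1 x), fun x => n.2 (m.2 x)).

Definition msum (R : lmodType CC) (s : seq (mult R)) : mult R :=
  (fun x => \sum_(m <- s) m.1 x, fun x => \sum_(m <- s) m.2 x).

Definition msw (A : Type) (R : lmodType CC) (cop : A -> seq (A * A)) (a : A)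
  (f : A -> A -> mult R) : mult R :=
  msum [seq f p.1 p.2 | p <- cop a].

Definition is_mod_alg (A : algType CC) (cop : A -> seq (A * A))
  (R : lmodType CC) (mul : R -> R -> R) (act : A -> R -> R) : Prop :=
  [/\ bilin act,
      forall x, act 1 x = x,
      forall a b x, act (a * b) x = act a (act b x) &
      forall a x y, act a (mul x y) = sw cop a (fun a1 a2 => mul (act a1 x) (act a2 y))].

Definition actM (A : algType CC) (cop : A -> seq (A * A)) (S Sinv : A -> A)
  (R : lmodType CC) (act : A -> R -> R) (a : A) (m : mult R) : mult R :=
  (fun x => sw cop a (fun a1 a2 => act a1 (m.1 (act (S a2) x))),
   fun x => sw cop a (fun a1 a2 => act a2 (m.2 (act (Sinv a1) x)))).

Definition cocycle_equiv (A : algType CC) (cop : A -> seq (A * A)) (S Sinv : A -> A)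
  (R : lmodType CC) (mul : R -> R -> R) (act1 act2 : A -> R -> R)
  (gamma : A -> mult R) : Prop :=
  [/\ forall a, is_mult mul (gamma a),
      forall x, lin (fun a => (gamma a).1 x) /\ lin (fun a => (gamma a).2 x),
      gamma 1 = mone R,
      forall a a', gamma (a * a') =
        msw cop a (fun a1 a2 => mmul (gamma a1) (actM cop S Sinv act1 a2 (gamma a'))) &
      forall a x, sw cop a (fun a1 a2 => (gamma a2).2 (act2 a1 x)) =
                  sw cop a (fun a1 a2 => (gamma a1).1 (act1 a2 x))].

Definition is_tensor (U V T : lmodType CC) (t : U -> V -> T) : Prop :=
  [/\ bilin t,
      forall (W : lmodType CC) (f : U -> V -> W), bilin f ->
        exists g : T -> W, lin g /\ forall u v, g (t u v) = f u v &
      forall (W : lmodType CC) (g1 g2 : T -> W), lin g1 -> lin g2 ->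
        (forall u v, g1 (t u v) = g2 (t u v)) -> forall w, g1 w = g2 w].

Definition is_smash (A : algType CC) (cop : A -> seq (A * A))
  (R : lmodType CC) (mul : R -> R -> R) (act : A -> R -> R)
  (T : lmodType CC) (t : R -> A -> T) (m : T -> T -> T) : Prop :=
  bilin m /\
  forall x a x' a', m (t x a) (t x' a') =
    sw cop a (fun a1 a2 => t (mul x (act a1 x')) (a2 * a')).

Definition alg_iso (T T' : lmodType CC) (m1 : T -> T -> T) (m2 : T' -> T' -> T')
  (phi : T -> T') : Prop :=
  [/\ lin phi, bijective phi & forall u v, phi (m1 u v) = m2 (phi u) (phi v)].

From Pilot Require Import Defs.
From mathcomp Require Import all_boot all_order all_algebra.
From mathcomp Require Import complex Rstruct.

(* Put gammabar(c) := sum c1 |>1 gamma(S c2).  The cocycle identity (i) and the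
   antipode axioms make gammabar a two-sided convolution inverse of gamma:
   sum gamma(a1) gammabar(a2) = eps(a) = sum gammabar(a1) gamma(a2).  Hence
   x # a |-> sum x gamma(a1) # a2 and x # a |-> sum x gammabar(a1) # a2 are mutually
   inverse linear maps of R (x) A, and the first one carries the product of R #_2 A
   to that of R #_1 A: by (i), (ii) and the module algebra property of the action
   on multipliers,
     sum x (a1 |>2 x') gamma(a2 b) = sum x gamma(a1) (a2 |>1 (x' gamma(b))). *)

Set Implicit Arguments. Unset Strict Implicit. Unset Printing Implicit Defensive.
Import GRing.Theory.
Local Open Scope ring_scope.

Section Linearity.
Variables U V W : lmodType CC.

Lemma lin0 (f : U -> V) : lin f -> f 0 = 0.
Proof.
move=> hf; have := hf 1 0 0; rewrite !scale1r addr0 => e.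
by apply: (addrI (f 0)); rewrite addr0 -e.
Qed.

Lemma linD (f : U -> V) : lin f -> forall u v, f (u + v) = f u + f v.
Proof. by move=> hf u v; have := hf 1 u v; rewrite !scale1r. Qed.

Lemma linZ (f : U -> V) : lin f -> forall c u, f (c *: u) = c *: f u.
Proof. by move=> hf c u; have := hf c u 0; rewrite !addr0 (lin0 hf) addr0. Qed.

Lemma lin_sum (f : U -> V) I (r : seq I) (F : I -> U) :
  lin f -> f (\sum_(i <- r) F i) = \sum_(i <- r) f (F i).
Proof.
move=> hf; elim: r => [|x r IH]; first by rewrite !big_nil (lin0 hf).
by rewrite !big_cons (linD hf) IH.
Qed.

Lemma lin_id : lin (fun u : U => u).
Proof. by []. Qed.

Lemma lin_comp (g : V -> W) (f : U -> V) : lin g -> lin f -> lin (fun u => g (f u)).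
Proof. by move=> hg hf c u u'; rewrite hf hg. Qed.

Lemma lin_scalel (f : U -> CC) (v : V) : lin f -> lin (fun u => f u *: v).
Proof. by move=> hf c u u'; rewrite hf scalerDl scalerA. Qed.

Lemma lin_bilinl (X : lmodType CC) (f : V -> X -> W) (h : U -> V) x :
  bilin f -> lin h -> lin (fun u => f (h u) x).
Proof. by move=> [hf _] hh; apply: (lin_comp (hf x)). Qed.

Lemma lin_bilinr (X : lmodType CC) (f : X -> V -> W) (h : U -> V) x :
  bilin f -> lin h -> lin (fun u => f x (h u)).
Proof. by move=> [_ hf] hh; apply: (lin_comp (hf x)). Qed.

End Linearity.

Section SweedlerSums.
Variables (A : Type) (cop : A -> seq (A * A)) (V W : lmodType CC).
Local Notation sw := (sw cop).

Lemma sw_lin (g : V -> W) a (f : A -> A -> V) :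
  lin g -> g (sw a f) = sw a (fun x y => g (f x y)).
Proof. by move=> hg; rewrite /Defs.sw lin_sum. Qed.

Lemma eq_sw a (f f' : A -> A -> V) :
  (forall x y, f x y = f' x y) -> sw a f = sw a f'.
Proof. by move=> e; apply: eq_bigr => p _; rewrite e. Qed.

Lemma sw_split a (f g : A -> A -> V) :
  sw a (fun x y => f x y + g x y) = sw a f + sw a g.
Proof. exact: big_split. Qed.

Lemma scaler_sw a (f : A -> A -> V) c :
  sw a (fun x y => c *: f x y) = c *: sw a f.
Proof. by rewrite /Defs.sw scaler_sumr. Qed.

Lemma exchange_sw a b (f : A -> A -> A -> A -> V) :
  sw a (fun x y => sw b (fun u v => f x y u v)) =
  sw b (fun u v => sw a (fun x y => f x y u v)).
Proof. exact: exchange_big. Qed.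

Lemma lin_sw_body (F : W -> A -> A -> V) a :
  (forall x y, lin (fun u => F u x y)) -> lin (fun u => sw a (F u)).
Proof.
by move=> hF c u u'; rewrite -scaler_sw -sw_split; apply: eq_sw => x y; apply: hF.
Qed.

End SweedlerSums.

Section TensorProduct.
Variables (U V T : lmodType CC) (t : U -> V -> T).
Hypothesis hT : is_tensor t.

Lemma tensor_bilin : bilin t. Proof. by case: hT. Qed.

Lemma tensor_ext (W : lmodType CC) (g1 g2 : T -> W) : lin g1 -> lin g2 ->
  (forall u v, g1 (t u v) = g2 (t u v)) -> g1 =1 g2.
Proof. by case: hT => _ _; apply. Qed.

Lemma tensor_ext2 (W : lmodType CC) (B1 B2 : T -> T -> W) : bilin B1 -> bilin B2 ->
  (forall u v u' v', B1 (t u v) (t u' v') = B2 (t u v) (t u' v')) -> forall w w', B1 w w' = B2 w w'.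
Proof.
move=> [hB1l hB1r] [hB2l hB2r] e w w'.
have e1 u v : B1 (t u v) =1 B2 (t u v).
  by apply: tensor_ext => //; apply: hB1r || apply: hB2r.
by apply: tensor_ext (hB1l w') (hB2l w') _ w => u v; apply: e1.
Qed.

End TensorProduct.

Section HopfAlgebra.
Variables (A : algType CC) (cop : A -> seq (A * A)) (eps : A -> CC) (S : A -> A).
Hypothesis hA : is_hopf cop eps S.
Variable Sinv : A -> A.
Hypotheses (hSK : cancel S Sinv) (hKS : cancel Sinv S).
Local Notation sw := (sw cop).

Lemma sw_coassoc (V : lmodType CC) (f : A -> A -> A -> V) a : trilin f ->
  sw a (fun x y => sw x (fun u v => f u v y)) = sw a (fun x y => sw y (fun u v => f x u v)).
Proof. by case: hA => _ hc _ _ _ hf; apply: hc. Qed.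

Lemma sw_mul (V : lmodType CC) (f : A -> A -> V) a b : bilin f ->
  sw (a * b) f = sw a (fun x y => sw b (fun u v => f (x * u) (y * v))).
Proof. by case: hA => _ _ [hm _] _ _ hf; apply: hm. Qed.

Lemma sw1 (V : lmodType CC) (f : A -> A -> V) : bilin f -> sw 1 f = f 1 1.
Proof. by case: hA => _ _ [_ hm] _ _ hf; apply: hm. Qed.

Lemma eps_lin : lin eps. Proof. by case: hA => _ _ _ []. Qed.
Lemma epsM a b : eps (a * b) = eps a * eps b. Proof. by case: hA => _ _ _ []. Qed.
Lemma eps1 : eps 1 = 1. Proof. by case: hA => _ _ _ []. Qed.
Lemma S_lin : lin S. Proof. by case: hA => _ _ _ _ []. Qed.

Lemma Sinv_lin : lin Sinv.
Proof. by move=> c u u'; apply: (can_inj hSK); rewrite hKS S_lin !hKS. Qed.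

Lemma lin_sw_arg (V W : lmodType CC) (f : A -> A -> V) (h : W -> A) :
  bilin f -> lin h -> lin (fun u => sw (h u) f).
Proof. by move=> hf; case: hA => hD _ _ _ _; apply: lin_comp (hD _ f hf). Qed.

Section AlgebraLinear.
Variables (W : lmodType CC) (h : W -> A).
Hypothesis hh : lin h.

Lemma lin_mulAl b : lin (fun u => h u * b).
Proof. by move=> c u u'; rewrite hh mulrDl scalerAl. Qed.

Lemma lin_mulAr b : lin (fun u => b * h u).
Proof. by move=> c u u'; rewrite hh mulrDr scalerAr. Qed.

Lemma lin_S : lin (fun u => S (h u)).
Proof. exact: lin_comp S_lin hh. Qed.

Lemma lin_Sinv : lin (fun u => Sinv (h u)).
Proof. exact: lin_comp Sinv_lin hh. Qed.

Lemma lin_eps_scale (V : lmodType CC) (v : V) : lin (fun u => eps (h u) *: v).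
Proof. exact: lin_comp (lin_scalel v eps_lin) hh. Qed.

End AlgebraLinear.

(* Hook for the linearity facts of the sections below, which redefine it with [::=]. *)
Ltac lin_atom := fail.

Ltac linearity := intros; lazymatch goal with
| |- trilin _ => split; [|split]; linearity
| |- bilin _ => split; linearity
| |- lin _ => first
   [ exact: lin_id
   | solve [ match goal with H : _ |- _ => apply H end ]
   | solve [ apply: lin_sw_arg; linearity ]
   | solve [ apply: lin_sw_body; linearity ]
   | solve [ apply: lin_mulAl; linearity ]
   | solve [ apply: lin_mulAr; linearity ]
   | solve [ apply: lin_S; linearity ]
   | solve [ apply: lin_Sinv; linearity ]
   | solve [ apply: lin_eps_scale; linearity ]
   | solve [ lin_atom; linearity ]
   | solve [ apply lin_bilinl; [eassumption | linearity] ]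
   | solve [ apply lin_bilinr; [eassumption | linearity] ]
   | solve [ eapply lin_comp; [eassumption | linearity] ] ]
end.

Ltac under_sw_in tac := tac; try (under eq_sw => ? ? do under_sw_in tac).
Ltac under_sw tac := tac; try (under [in LHS]eq_sw => ? ? do under_sw_in tac).
Ltac under_sw2 tac := under_sw tac; symmetry; under_sw tac; symmetry.

Ltac pull_atom := fail.
Ltac pull_sums := under_sw2 ltac:(repeat pull_atom).

Ltac coassoc_in := try (under eq_sw => ? ? do coassoc_in);
  try ((rewrite sw_coassoc; [|linearity]); coassoc_in).
Ltac coassoc_lhs := try (under [in LHS]eq_sw => ? ? do coassoc_in);
  try ((rewrite [in LHS]sw_coassoc; [|linearity]); coassoc_lhs).
Ltac coassoc_normal := coassoc_lhs; symmetry; coassoc_lhs; symmetry.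

Lemma sw_counitl (V : lmodType CC) (g : A -> V) a : lin g -> sw a (fun x y => eps x *: g y) = g a.
Proof.
case: hA => _ _ _ [_ _ _ cuL _] _ hg.
by rewrite -{2}(cuL a) (sw_lin _ _ _ hg); apply: eq_sw => x y; rewrite (linZ hg).
Qed.

Lemma sw_counitr (V : lmodType CC) (g : A -> V) a : lin g -> sw a (fun x y => eps y *: g x) = g a.
Proof.
case: hA => _ _ _ [_ _ _ _ cuR] _ hg.
by rewrite -{2}(cuR a) (sw_lin _ _ _ hg); apply: eq_sw => x y; rewrite (linZ hg).
Qed.

Lemma sw_antipodel (V : lmodType CC) (F : A -> V) a : lin F -> sw a (fun x y => F (S x * y)) = eps a *: F 1.
Proof.
by case: hA => _ _ _ _ [_ apL _] hF; rewrite -(linZ hF) -apL (sw_lin _ _ _ hF).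
Qed.

Lemma sw_antipoder (V : lmodType CC) (F : A -> V) a : lin F -> sw a (fun x y => F (x * S y)) = eps a *: F 1.
Proof.
by case: hA => _ _ _ _ [_ _ apR] hF; rewrite -(linZ hF) -apR (sw_lin _ _ _ hF).
Qed.

Lemma sw_antipode_nested (V : lmodType CC) (G : A -> A -> V) y : bilin G ->
  sw y (fun p q => sw p (fun y1 r => sw r (fun y2 y3 => G (y1 * S q) (y2 * S y3))))
  = eps y *: G 1 1.
Proof.
move=> hG.
under eq_sw => p q do under eq_sw => y1 r do
  (rewrite (sw_antipoder (F := fun z => G (y1 * S q) z)); [|linearity]).
under eq_sw => p q do (rewrite (sw_counitr (g := fun z => G (z * S q) 1)); [|linearity]).
by rewrite (sw_antipoder (F := fun z => G z 1)); [|linearity].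
Qed.

Lemma sw_leg_eq (V : lmodType CC) (W : lmodType CC) (f g : A -> A -> V) (G : V -> A -> W) a :
  bilin f -> bilin g -> bilin G -> (forall b, sw b f = sw b g) ->
  sw a (fun a1 a2 => sw a2 (fun c1 c2 => G (f a1 c1) c2)) =
  sw a (fun a1 a2 => sw a2 (fun c1 c2 => G (g a1 c1) c2)).
Proof.
move=> hf hg hG fg.
rewrite -!sw_coassoc; try by linearity.
by apply: eq_sw => z w; rewrite -!(sw_lin _ _ _ (hG.1 w)) fg.
Qed.

Lemma sw_leg_counit (V : lmodType CC) (W : lmodType CC) (f : A -> A -> V) (G : V -> A -> W) v a :
  bilin f -> bilin G -> (forall b, sw b f = eps b *: v) ->
  sw a (fun a1 a2 => sw a2 (fun c1 c2 => G (f a1 c1) c2)) = G v a.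
Proof.
move=> hf hG fv.
rewrite -sw_coassoc; last by linearity.
under eq_sw => z w do rewrite -(sw_lin _ _ _ (hG.1 w)) fv (linZ (hG.1 w)).
by rewrite sw_counitl //; linearity.
Qed.

(* Insert eps(c2) 1 (x) 1 = sum c2 S(c5) (x) c3 S(c4); then Delta(S c1) Delta(c2)
   = Delta(S(c1) c2) collapses by the antipode axiom. *)
Lemma antipode_sw (V : lmodType CC) (f : A -> A -> V) c : bilin f ->
  sw (S c) f = sw c (fun u v => f (S v) (S u)).
Proof.
move=> hf.
have hD : lin (fun b => sw b f) by linearity.
transitivity (sw c (fun x y => eps y *: sw (S x) f)).
  by rewrite (sw_counitr (g := fun x => sw (S x) f)); [|linearity].
transitivity (sw c (fun x y => sw y (fun p q => sw p (fun y1 r => sw r (fun y2 y3 =>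
   sw (S x) (fun u v => f (u * (y1 * S q)) (v * (y2 * S y3)))))))).
  apply: eq_sw => x y.
  rewrite (sw_antipode_nested (G := fun b b' => sw (S x) (fun u v => f (u * b) (v * b'))));
    last by linearity.
  by congr (_ *: _); apply: eq_sw => u v; rewrite !mulr1.
transitivity (sw c (fun z w => sw z (fun x b => sw w (fun y3 q =>
   sw (S x * b) (fun u v => f (u * S q) (v * S y3)))))).
  transitivity (sw c (fun z w => sw z (fun x b => sw b (fun y1 y2 => sw w (fun y3 q =>
     sw (S x) (fun u v => f (u * (y1 * S q)) (v * (y2 * S y3)))))))).
    by coassoc_normal.
  apply: eq_sw => z w; apply: eq_sw => x b.
  rewrite [in LHS]exchange_sw; apply: eq_sw => y3 q.
  rewrite sw_mul; last by linearity.
  rewrite [in LHS]exchange_sw.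
  by apply: eq_sw => y1 y2; apply: eq_sw => u v; rewrite !mulrA.
transitivity (sw c (fun z w => eps z *: sw w (fun y3 q => f (S q) (S y3)))).
  apply: eq_sw => z w.
  rewrite (sw_antipodel (F := fun b => sw w (fun y3 q => sw b (fun u v => f (u * S q) (v * S y3)))));
    last by linearity.
  by congr (_ *: _); apply: eq_sw => y3 q; rewrite sw1 ?mul1r //; linearity.
by rewrite (sw_counitl (g := fun w => sw w (fun y3 q => f (S q) (S y3)))); [|linearity].
Qed.

Lemma epsS a : eps (S a) = eps a.
Proof.
have := sw_antipoder (F := eps) a eps_lin.
rewrite eps1 -[_ *: 1]/(eps a * 1) mulr1 => <-.
have -> : S a = sw a (fun x y => eps x *: S y) by rewrite sw_counitl //; apply: S_lin.
rewrite (sw_lin _ _ _ eps_lin); apply: eq_sw => x y.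
by rewrite epsM (linZ eps_lin).
Qed.

Lemma epsSinv a : eps (Sinv a) = eps a.
Proof. by rewrite -{2}(hKS a) epsS. Qed.

Lemma antipode_inv_sw (V : lmodType CC) (f : A -> A -> V) c : bilin f ->
  sw (Sinv c) f = sw c (fun u v => f (Sinv v) (Sinv u)).
Proof.
move=> hf; have := antipode_sw (f := fun u v => f (Sinv v) (Sinv u)) (Sinv c).
rewrite hKS => ->; last by linearity.
by apply: eq_sw => u v; rewrite !hSK.
Qed.

Lemma sw_antipode_invl (V : lmodType CC) (F : A -> V) b : lin F ->
  sw b (fun x y => F (Sinv y * x)) = eps b *: F 1.
Proof.
move=> hF; rewrite -epsSinv -sw_antipoder // antipode_inv_sw; last by linearity.
by apply: eq_sw => u v; rewrite hKS.
Qed.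

Lemma sw_antipode_invr (V : lmodType CC) (F : A -> V) b : lin F ->
  sw b (fun x y => F (y * Sinv x)) = eps b *: F 1.
Proof.
move=> hF; rewrite -epsSinv -sw_antipodel // antipode_inv_sw; last by linearity.
by apply: eq_sw => u v; rewrite hKS.
Qed.

Section ModuleAlgebra.
Variables (R : lmodType CC) (mul : R -> R -> R).
Hypothesis mul_bilin : bilin mul.
Variable act : A -> R -> R.
Hypothesis hact : is_mod_alg cop mul act.

Lemma act_bilin : bilin act. Proof. by case: hact. Qed.
Lemma act_one x : act 1 x = x. Proof. by case: hact. Qed.
Lemma act_comp a b x : act (a * b) x = act a (act b x). Proof. by case: hact. Qed.
Lemma act_mul a x y : act a (mul x y) = sw a (fun a1 a2 => mul (act a1 x) (act a2 y)).
Proof. by case: hact. Qed.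

Lemma lin_actl (W : lmodType CC) (h : W -> A) x : lin h -> lin (fun u => act (h u) x).
Proof. exact: lin_bilinl act_bilin. Qed.

Lemma lin_actr (W : lmodType CC) (h : W -> R) b : lin h -> lin (fun u => act b (h u)).
Proof. exact: lin_bilinr act_bilin. Qed.

Ltac lin_atom ::= first [ apply: lin_actl | apply: lin_actr ].

Lemma act_sw b a (f : A -> A -> R) : act b (sw a f) = sw a (fun x y => act b (f x y)).
Proof. by rewrite (sw_lin _ _ _ (act_bilin.2 b)). Qed.

Lemma mul_swl a (f : A -> A -> R) y : mul (sw a f) y = sw a (fun u v => mul (f u v) y).
Proof. by rewrite (sw_lin _ _ _ (mul_bilin.1 y)). Qed.

Lemma mul_swr a (f : A -> A -> R) y : mul y (sw a f) = sw a (fun u v => mul y (f u v)).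
Proof. by rewrite (sw_lin _ _ _ (mul_bilin.2 y)). Qed.

Ltac pull_atom ::= first [ rewrite act_sw | rewrite mul_swl | rewrite mul_swr ].

Local Notation actMr a m := (actM cop S Sinv act a m).2.

Lemma lin_actM_r_arg (W : lmodType CC) (h : W -> A) (m : mult R) y :
  lin m.2 -> lin h -> lin (fun u => actMr (h u) m y).
Proof. by rewrite /=; linearity. Qed.

Lemma lin_actM_r (W : lmodType CC) (h : W -> R) a (m : mult R) :
  lin m.2 -> lin h -> lin (fun u => actMr a m (h u)).
Proof. by rewrite /=; linearity. Qed.

Section RightMultiplier.
Variable m : mult R.
Hypotheses (m_lin : lin m.2) (m_mul : forall x y, m.2 (mul x y) = mul x (m.2 y)).

Lemma mult_r_sw a (f : A -> A -> R) : m.2 (sw a f) = sw a (fun u v => m.2 (f u v)).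
Proof. exact: sw_lin. Qed.

Lemma actM_r_mul a y z : actMr a m (mul y z) = mul y (actMr a m z).
Proof.
rewrite /=; transitivity (sw a (fun u w => sw w (fun r q => sw r (fun v p =>
  mul (act p (act (Sinv v) y)) (act q (m.2 (act (Sinv u) z))))))).
  under eq_sw => u w do (rewrite act_mul antipode_inv_sw; [|linearity]).
  pull_sums; under_sw ltac:(rewrite ?mult_r_sw ?m_mul); pull_sums.
  under_sw ltac:(rewrite ?act_mul); pull_sums.
  by coassoc_normal.
under_sw ltac:(rewrite -?act_comp).
under eq_sw => u w do under eq_sw => r q do
  (rewrite (sw_antipode_invr (F := fun b => mul (act b y) (act q (m.2 (act (Sinv u) z)))));
   [|linearity]).
under eq_sw => u w do
  (rewrite (sw_counitl (g := fun q => mul (act 1 y) (act q (m.2 (act (Sinv u) z)))));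
   [|linearity]).
by rewrite act_one mul_swr.
Qed.

Lemma actM_r_act a y : sw a (fun a1 a2 => actMr a2 m (act a1 y)) = act a (m.2 y).
Proof.
transitivity (sw a (fun z v => sw z (fun a1 u => act v (m.2 (act (Sinv u * a1) y))))).
  by under_sw2 ltac:(rewrite /= ?act_comp); coassoc_normal.
under eq_sw => z v do
  (rewrite (sw_antipode_invl (F := fun b => act v (m.2 (act b y)))); [|linearity]).
by rewrite (sw_counitl (g := fun v => act v (m.2 (act 1 y)))) ?act_one //; linearity.
Qed.

End RightMultiplier.

End ModuleAlgebra.

Section CocycleEquivalence.
Variables (R : lmodType CC) (mul : R -> R -> R).
Hypothesis mul_bilin : bilin mul.
Variables act1 act2 : A -> R -> R.
Hypotheses (h1 : is_mod_alg cop mul act1) (h2 : is_mod_alg cop mul act2).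
Variable gamma : A -> mult R.
Hypothesis hgamma : cocycle_equiv cop S Sinv mul act1 act2 gamma.

Local Notation actMr a m := (actM cop S Sinv act1 a m).2.

Lemma gamma_mult b : is_mult mul (gamma b). Proof. by case: hgamma. Qed.
Lemma gamma_r_lin b : lin (gamma b).2. Proof. by case: (gamma_mult b). Qed.
Lemma gamma_r_mul b x y : (gamma b).2 (mul x y) = mul x ((gamma b).2 y).
Proof. by case: (gamma_mult b). Qed.
Lemma gamma_mid b x y : mul ((gamma b).2 x) y = mul x ((gamma b).1 y).
Proof. by case: (gamma_mult b). Qed.
Lemma gamma1_r y : (gamma 1).2 y = y. Proof. by case: hgamma => _ _ ->. Qed.

Lemma lin_gamma_r (W : lmodType CC) (h : W -> R) b : lin h -> lin (fun u => (gamma b).2 (h u)).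
Proof. exact: lin_comp (gamma_r_lin b). Qed.

Lemma lin_gamma_r_arg (W : lmodType CC) (h : W -> A) y : lin h -> lin (fun u => (gamma (h u)).2 y).
Proof. by case: hgamma => _ /(_ y) [_ hl] _ _ _; apply: lin_comp hl. Qed.

Lemma lin_actM_gamma_arg (W : lmodType CC) (h : W -> A) a y :
  lin h -> lin (fun u => actMr a (gamma (h u)) y).
Proof.
by move=> hh; apply: lin_sw_body => a1 a2; apply: (lin_actr h1); apply: lin_gamma_r_arg.
Qed.

(* y gammabar(c) *)
Definition gamma_inv_r c y := sw c (fun c1 c2 => actMr c1 (gamma (S c2)) y).

Lemma lin_gamma_inv_r_arg (W : lmodType CC) (h : W -> A) y :
  lin h -> lin (fun u => gamma_inv_r (h u) y).
Proof.
move=> hh; apply: lin_sw_arg hh; split=> [c2 | c1].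
  by apply: (lin_actM_r_arg h1); [apply: gamma_r_lin | apply: lin_id].
exact: lin_actM_gamma_arg S_lin.
Qed.

Lemma lin_gamma_inv_r (W : lmodType CC) (h : W -> R) c :
  lin h -> lin (fun u => gamma_inv_r c (h u)).
Proof.
move=> hh; apply: lin_sw_body => c1 c2.
by apply: (lin_actM_r h1); [apply: gamma_r_lin | exact: hh].
Qed.

Ltac lin_atom ::= first
  [ apply: (lin_actl h1) | apply: (lin_actr h1) | apply: (lin_actl h2) | apply: (lin_actr h2)
  | apply: lin_gamma_r | apply: lin_gamma_r_arg
  | apply: lin_actM_gamma_arg | apply: (lin_actM_r_arg h1) | apply: (lin_actM_r h1)
  | apply: gamma_r_lin | apply: lin_gamma_inv_r_arg | apply: lin_gamma_inv_r ].

Lemma gamma_r_sw b a (f : A -> A -> R) :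
  (gamma b).2 (sw a f) = sw a (fun u v => (gamma b).2 (f u v)).
Proof. exact: sw_lin (gamma_r_lin b). Qed.

Lemma actM_gamma_r_sw c b a (f : A -> A -> R) :
  actMr c (gamma b) (sw a f) = sw a (fun u v => actMr c (gamma b) (f u v)).
Proof. by apply: sw_lin; linearity. Qed.

Ltac pull_atom ::= first
  [ rewrite (act_sw h1) | rewrite (act_sw h2) | rewrite (mul_swl mul_bilin)
  | rewrite (mul_swr mul_bilin) | rewrite gamma_r_sw | rewrite actM_gamma_r_sw ].

Lemma gamma_r_cocycle a a' y :
  (gamma (a * a')).2 y = sw a (fun a1 a2 => actMr a2 (gamma a') ((gamma a1).2 y)).
Proof. by case: hgamma => _ _ _ -> _; rewrite /msw /msum /= big_map. Qed.

Lemma gamma_r_intertwine x x' a :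
  sw a (fun a1 a2 => (gamma a2).2 (mul x (act2 a1 x'))) =
  sw a (fun a1 a2 => mul ((gamma a1).2 x) (act1 a2 x')).
Proof.
under eq_sw do rewrite gamma_r_mul.
rewrite -mul_swr //; case: hgamma => _ _ _ _ ->; rewrite mul_swr //.
by apply: eq_sw => a1 a2; rewrite gamma_mid.
Qed.

(* Cocycle (i) at (S b1, b2), with Delta(S b) = sum S(b2) (x) S(b1), summed against
   sum S(b1) b2 = eps(b). *)
Lemma antipode_act_gamma b y :
  sw b (fun b1 r => act1 (S b1) (sw r (fun b2 r' => sw r' (fun b3 b4 =>
    (gamma b4).2 (act1 b2 ((gamma (S b3)).2 y)))))) = eps b *: y.
Proof.
transitivity (sw b (fun x z => (gamma (S x * z)).2 y)); last first.
  by rewrite (sw_antipodel (F := fun e => (gamma e).2 y)) ?gamma1_r //; linearity.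
symmetry; under eq_sw => x z do (rewrite gamma_r_cocycle /= antipode_sw; [|linearity]).
under eq_sw => x z do under eq_sw => d1 d2 do (rewrite antipode_sw; [|linearity]).
under_sw ltac:(rewrite ?hSK).
by pull_sums; coassoc_normal.
Qed.

Lemma act_gammaS_gamma c y :
  sw c (fun c1 r => sw r (fun c2 c3 => (gamma c3).2 (act1 c1 ((gamma (S c2)).2 y)))) =
  act1 c y.
Proof.
set K := fun r => sw r (fun c1 r' => sw r' (fun c2 c3 =>
  (gamma c3).2 (act1 c1 ((gamma (S c2)).2 y)))).
have linK : lin K by rewrite /K; linearity.
rewrite -[LHS]/(K c).
transitivity (sw c (fun m r => sw m (fun c1 b1 => act1 (c1 * S b1) (K r)))).
  under [RHS]eq_sw => m r do (rewrite (sw_antipoder (F := fun e => act1 e (K r))); [|linearity]).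
  by rewrite (sw_counitl (g := fun r => act1 1 (K r))) ?(act_one h1) //; linearity.
rewrite sw_coassoc; last by linearity.
under eq_sw => c1 r1 do under eq_sw => b1 r do rewrite (act_comp h1).
under eq_sw => c1 r1 do rewrite -(act_sw h1) antipode_act_gamma (linZ ((act_bilin h1).2 c1)).
by rewrite sw_counitr //; linearity.
Qed.

Lemma gamma_gamma_inv a y :
  sw a (fun a1 a2 => gamma_inv_r a2 ((gamma a1).2 y)) = eps a *: y.
Proof.
transitivity (sw a (fun z c2 => (gamma (z * S c2)).2 y)).
  under [RHS]eq_sw do rewrite gamma_r_cocycle.
  by rewrite /gamma_inv_r; coassoc_normal.
by rewrite (sw_antipoder (F := fun e => (gamma e).2 y)) ?gamma1_r //; linearity.
Qed.

Lemma gamma_inv_gamma a y :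
  sw a (fun a1 a2 => (gamma a2).2 (gamma_inv_r a1 y)) = eps a *: y.
Proof.
transitivity (sw a (fun u r => act1 r (act1 (Sinv u) y))).
  under [RHS]eq_sw => u r do rewrite -act_gammaS_gamma.
  by rewrite /gamma_inv_r /=; pull_sums; coassoc_normal.
under eq_sw do rewrite -(act_comp h1).
by rewrite (sw_antipode_invr (F := fun e => act1 e y)) ?(act_one h1) //; linearity.
Qed.

Lemma gamma_r_smash_mul b x x' a :
  sw a (fun a1 a2 => (gamma (a2 * b)).2 (mul x (act2 a1 x'))) =
  sw a (fun a1 a2 => mul ((gamma a1).2 x) (act1 a2 ((gamma b).2 x'))).
Proof.
transitivity (sw a (fun z q =>
  actMr q (gamma b) (sw z (fun a1 p => (gamma p).2 (mul x (act2 a1 x')))))).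
  under eq_sw do rewrite gamma_r_cocycle.
  by pull_sums; coassoc_normal.
under eq_sw => z q do rewrite gamma_r_intertwine.
transitivity (sw a (fun a1 r =>
  mul ((gamma a1).2 x) (sw r (fun p q => actMr q (gamma b) (act1 p x'))))).
  under_sw ltac:(rewrite ?actM_gamma_r_sw ?(actM_r_mul mul_bilin h1 (gamma_r_lin b) (gamma_r_mul b))).
  under [RHS]eq_sw do rewrite (mul_swr mul_bilin).
  by coassoc_normal.
by under eq_sw do rewrite (actM_r_act h1 (gamma_r_lin b)).
Qed.

Section SmashProducts.
Variables (T : lmodType CC) (t : R -> A -> T).
Hypothesis hT : is_tensor t.
Variables m1 m2 : T -> T -> T.
Hypotheses (hm1 : is_smash cop mul act1 t m1) (hm2 : is_smash cop mul act2 t m2).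

(* Picked up from the context by [linearity]. *)
Let t_bilin : bilin t := tensor_bilin hT.

Section Isomorphism.
Variables psi chi : T -> T.
Hypotheses (psi_lin : lin psi) (chi_lin : lin chi).
Hypothesis psiE : forall y c, psi (t y c) = sw c (fun c1 c2 => t ((gamma c1).2 y) c2).
Hypothesis chiE : forall y c, chi (t y c) = sw c (fun c1 c2 => t (gamma_inv_r c1 y) c2).

Lemma chi_psi : cancel psi chi.
Proof.
apply: (tensor_ext hT (g1 := fun w => chi (psi w)) (g2 := id)) => //; first by linearity.
move=> y c /=; rewrite psiE (sw_lin _ _ _ chi_lin).
under eq_sw do rewrite chiE.
by apply: (sw_leg_counit (f := fun a1 c1 => gamma_inv_r c1 ((gamma a1).2 y)) (G := t));
  [linearity | linearity | move=> b; apply: gamma_gamma_inv].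
Qed.

Lemma psi_chi : cancel chi psi.
Proof.
apply: (tensor_ext hT (g1 := fun w => psi (chi w)) (g2 := id)) => //; first by linearity.
move=> y c /=; rewrite chiE (sw_lin _ _ _ psi_lin).
under eq_sw do rewrite psiE.
by apply: (sw_leg_counit (f := fun a1 c1 => (gamma c1).2 (gamma_inv_r a1 y)) (G := t));
  [linearity | linearity | move=> b; apply: gamma_inv_gamma].
Qed.

Lemma psi_smash x a x' a' : psi (m2 (t x a) (t x' a')) = m1 (psi (t x a)) (psi (t x' a')).
Proof.
have [m1_bilin m1E] := hm1.
rewrite hm2.2 (sw_lin _ _ _ psi_lin) !psiE.
transitivity (sw a' (fun b1 b2 => sw a (fun a1 a2 => sw a2 (fun p q =>
  t ((gamma (p * b1)).2 (mul x (act2 a1 x'))) (q * b2))))).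
  rewrite exchange_sw; apply: eq_sw => a1 a2.
  by rewrite psiE sw_mul; [exact: exchange_sw | linearity].
transitivity (sw a' (fun b1 b2 => sw a (fun a1 a2 => sw a2 (fun u v =>
  t (mul ((gamma a1).2 x) (act1 u ((gamma b1).2 x'))) (v * b2))))).
  apply: eq_sw => b1 b2.
  apply: (sw_leg_eq (f := fun a1 p => (gamma (p * b1)).2 (mul x (act2 a1 x')))
    (g := fun a1 u => mul ((gamma a1).2 x) (act1 u ((gamma b1).2 x')))
    (G := fun y c => t y (c * b2))); try by linearity.
  by move=> b; apply: gamma_r_smash_mul.
rewrite (sw_lin _ _ _ (m1_bilin.1 _)).
under [RHS]eq_sw do rewrite (sw_lin _ _ _ (m1_bilin.2 _)).
rewrite [RHS]exchange_sw.
by under [RHS]eq_sw => b1 b2 do under eq_sw => a1 a2 do rewrite m1E.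
Qed.

Lemma psi_mul u v : psi (m2 u v) = m1 (psi u) (psi v).
Proof.
have [m1_bilin _] := hm1; have [m2_bilin _] := hm2.
by apply: (tensor_ext2 hT (B1 := fun u v => psi (m2 u v))
  (B2 := fun u v => m1 (psi u) (psi v))); [linearity | linearity | exact: psi_smash].
Qed.

End Isomorphism.

Lemma smash_alg_iso : exists phi : T -> T, alg_iso m1 m2 phi.
Proof.
have [_ lift _] := hT.
have [psi [psi_lin psiE]] : exists g : T -> T, lin g /\
    forall y c, g (t y c) = sw c (fun c1 c2 => t ((gamma c1).2 y) c2).
  by apply: lift; linearity.
have [chi [chi_lin chiE]] : exists g : T -> T, lin g /\
    forall y c, g (t y c) = sw c (fun c1 c2 => t (gamma_inv_r c1 y) c2).
  by apply: lift; linearity.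
have psiK : cancel chi psi by apply: psi_chi.
have chiK : cancel psi chi by apply: chi_psi.
have psiM : forall u v, psi (m2 u v) = m1 (psi u) (psi v) by apply: psi_mul.
exists chi; split => //; first by exists psi.
by move=> u v; apply: (can_inj chiK); rewrite psiK psiM !psiK.
Qed.

End SmashProducts.

End CocycleEquivalence.

End HopfAlgebra.

Unset Implicit Arguments.

Theorem proposition5p13
  (A : algType CC) (cop : A -> seq (A * A)) (eps : A -> CC) (S Sinv : A -> A)
  (hA : is_hopf cop eps S)
  (hSK : cancel S Sinv) (hKS : cancel Sinv S)
  (R : lmodType CC) (mul : R -> R -> R) (hR : is_nd_algebra mul)
  (act1 act2 : A -> R -> R)
  (h1 : is_mod_alg cop mul act1) (h2 : is_mod_alg cop mul act2)
  (gamma : A -> mult R) (hgamma : cocycle_equiv cop S Sinv mul act1 act2 gamma)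
  (T : lmodType CC) (t : R -> A -> T) (hT : is_tensor t)
  (m1 m2 : T -> T -> T)
  (hm1 : is_smash cop mul act1 t m1) (hm2 : is_smash cop mul act2 t m2) :
  exists phi : T -> T, alg_iso m1 m2 phi.
Proof.
have [mul_bilin _ _ _] := hR.
exact: (smash_alg_iso hA hSK hKS mul_bilin h1 h2 hgamma hT hm1 hm2).
Qed.
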